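(* Let $Q$ be a quadrangulation with a strong labeling $\phi$, and let $X$ be the $2$-orientation induced by $\phi$. Let $C$ be a directed cycle in $X$ and let $X_C$ be the $2$-orientation obtained from $X$ by reversing all edges of $C$. Then the strong labeling corresponding to $X_C$ is obtained from $\phi$ by complementing (replacing $\ell$ by $1-\ell$) the labels of all angles lying inside $C$, and leaving all other labels unchanged.
   Context: A quadrangulation is a simple plane graph with at least four vertices all of whose faces (including the outer face) are bounded by $4$-cycles; it is bipartite, with vertices properly colored black and white. An angle is an incidence of a vertex with a face; an angle lies inside $C$ if its face lies in the interior of $C$. A strong labeling of $Q$ is a map from the angles of $Q$ to $\{0,1\}$ such that: (G0) the two black vertices on the outer face are named $s_0$ and $s_1$, and all angles at $s_i$ are labeled $i$; (G1) for each vertex $v\notin\{s_0,s_1\}$ the labels around $v$ form one non-empty cyclic interval of $1$s and one non-empty cyclic interval of $0$s; (G2) for each edge, the two labels on the two sides of the edge coincide at one endpoint and differ at the other; (G3) the labels in each bounded face, read cyclically, are $0,0,1,1$, and reading the labels of the outer face in clockwise order starting at $s_0$ they are $0,0,1,1$. A strong labeling induces an orientation of the edges: each edge is oriented towards the endpoint at which its two labels coincide; this is a $2$-orientation, i.e. every vertex other than $s_0,s_1$ has outdegree exactly $2$. The map sending a strong labeling to its induced $2$-orientation is a bijection between strong labelings of $Q$ (with $s_0$ fixed) and $2$-orientations of $Q$; ''the strong labeling corresponding to'' a $2$-orientation refers to this bijection. *)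

From mathcomp Require Import all_boot all_fingroup.
Set Implicit Arguments. Unset Strict Implicit. Unset Printing Implicit Defensive.

Section Maps.
Variables (V D : finType) (alpha sigma : {perm D}) (tail : D -> V).

(* Darts: each dart d is an edge-end, going out of vertex [tail d].
   [alpha] = the other dart of the same edge; [sigma d] = next dart
   counterclockwise around [tail d]. *)
Definition head (d : D) : V := tail (alpha d).

(* Face permutation: the face traversal u->v->w where vw follows vu
   counterclockwise around v; faces lie to the right of their traversal,
   so bounded faces are traversed clockwise, the outer face counterclockwise. *)
Definition phi (d : D) : D := sigma (alpha d).
Definition phiinv (d : D) : D := alpha ((sigma^-1)%g d).

(* Angles = corners: dart d represents the angle at vertex [tail d]
   between [(sigma^-1) d] and [d]; it lies in the face (phi-orbit) of d. *)

Definition plane_quadrangulation : Prop :=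
  [/\
      [/\ (forall d, alpha (alpha d) = d /\ alpha d != d),
          (forall d, tail (sigma d) = tail d),
          (forall d d', tail d = tail d' -> fconnect sigma d d') &
          (forall v, exists d, tail d = v)],
      (forall d, head d != tail d) /\
      (forall d d', tail d = tail d' -> head d = head d' -> d = d'),
      (forall d d', connect (fun x y => (y == sigma x) || (y == alpha x)) d d'),
      (* Euler's formula V - E + F = 2 (with E = #|D|/2): genus 0, i.e. plane *)
      ((#|V| + fcard phi D) * 2 = #|D| + 4)%N &
      (forall d, fingraph.order phi d = 4 /\ uniq (map tail (fingraph.orbit phi d))) /\
      (4 <= #|V|)%N ].

Definition proper_bicoloring (black : V -> bool) : Prop :=
  forall d, black (head d) != black (tail d).

(* [o] is a dart of the outer face. *)
Definition on_face (o : D) (v : V) : bool := [exists e, fconnect phi o e && (tail e == v)].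

(* labels: true = 1, false = 0 *)
Definition strong_labeling (black : V -> bool) (o : D) (s0 s1 : V) (lab : D -> bool) : Prop :=
  [/\ [/\ s0 != s1, black s0, black s1, on_face o s0 & on_face o s1],
      (forall d, tail d = s0 -> lab d = false) /\ (forall d, tail d = s1 -> lab d = true),
      (forall v, v != s0 -> v != s1 -> exists d, tail d = v /\
          exists a b, [/\ (0 < a)%N, (0 < b)%N &
                       map lab (fingraph.orbit sigma d) = nseq a true ++ nseq b false]),
      (forall d, (lab d == lab (sigma d)) != (lab (alpha d) == lab (sigma (alpha d)))) &
      (forall d, ~~ fconnect phi o d -> exists e, fconnect phi d e /\
          map lab (fingraph.orbit phi e) = [:: false; false; true; true]) /\
      (forall e, fconnect phi o e -> tail e = s0 ->
          map lab (fingraph.orbit phiinv e) = [:: false; false; true; true]) ].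

(* Induced orientation: [orient lab d] iff the edge of d is oriented from
   [tail d] to [head d], i.e. the two labels at [head d] coincide. *)
Definition orient (lab : D -> bool) (d : D) : bool :=
  lab (alpha d) == lab (sigma (alpha d)).

Definition directed_cycle (X : D -> bool) (c : seq D) : Prop :=
  [/\ (3 <= size c)%N, uniq (map tail c), all X c &
      path.cycle (fun d d' => head d == tail d') c].

Definition reverse_on (X : D -> bool) (c : seq D) (d : D) : bool :=
  if d \in c then false else if alpha d \in c then true else X d.

(* adjacency of angles not crossing C: along a face, or across an edge not in C *)
Definition region_adj (c : seq D) (x y : D) : bool :=
  [|| y == phi x, x == phi y | [&& y == alpha x, x \notin c & y \notin c]].

Definition inside (o : D) (c : seq D) (d : D) : bool := ~~ connect (region_adj c) d o.

Definition complement_inside (o : D) (c : seq D) (lab : D -> bool) (d : D) : bool :=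
  if inside o c d then ~~ lab d else lab d.

End Maps.

(* Complementing the labels inside C adds (mod 2) the indicator [inside] of
   the angles separated from the outer face by C.  The heart of the proof is a
   discrete Jordan curve theorem: [inside] changes value exactly across the
   edges of C.  Over F_2 the edge set of C has even degree at every vertex, so
   it lies in the kernel of the edge boundary map; by Euler's formula and a
   dimension count this kernel is the image of the face boundary map, which
   yields a 2-colouring P of the faces changing exactly across C.  Every angle
   can reach C without crossing it, and the angles along each side of C are
   mutually reachable, so there are exactly two regions, told apart by P, and
   [inside] = P + P(o).
   Hence the induced orientation flips exactly on C.  Around a vertex the
   labels change exactly across the outgoing darts, so (G1) says that the
   outdegree is two, which reversing a directed cycle preserves.  No dart of C
   leaves s0 or s1, whose angles lie outside; and complementing the word 0011
   of an inner face gives 1100, which is 0011 read from the opposite corner. *)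

From Pilot Require Import Defs.
From HB Require Import structures.
From mathcomp Require Import all_boot all_fingroup all_algebra zify.
Set Implicit Arguments. Unset Strict Implicit. Unset Printing Implicit Defensive.
Import GRing.Theory.

(** * Orbits of permutations and label transitions *)

Lemma fconnect_eq_invariant (T : finType) (T' : eqType) (f : T -> T) (k : T -> T') :
  (forall x, k (f x) = k x) -> forall x y, fconnect f x y -> k x = k y.
Proof. by move=> kf; apply: fconnect_invariant => x; apply/eqP/kf. Qed.

Section OrbitArcs.
Variables (T : finType) (s : {perm T}).

Lemma order_perm x : fingraph.order s (s x) = fingraph.order s x.
Proof. by apply/esym/eq_card/same_fconnect1/perm_inj. Qed.

Lemma iter_order_pred x : iter (fingraph.order s (s x)).-1 s (s x) = x.
Proof. by rewrite -iterSr orderSpred order_perm (iter_order (@perm_inj _ s)). Qed.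

Lemma eq_iter_orbit x i j : i < fingraph.order s x -> j < fingraph.order s x ->
  (iter i s x == iter j s x) = (i == j).
Proof.
move=> ix jx; apply/eqP/eqP => [E|-> //].
by rewrite -(findex_iter ix) E findex_iter.
Qed.

Lemma connect_iter (e : rel T) x m :
  (forall j, j < m -> connect e (iter j s x) (iter j.+1 s x)) -> connect e x (iter m s x).
Proof.
elim: m => [//|m IHm] e_step.
by apply: connect_trans (IHm _) (e_step m _) => // j /ltnW; apply: e_step.
Qed.

Lemma connect_orbit_arc (e : rel T) (bad : pred T) a b :
  fconnect s a b -> (forall y, fconnect s a y -> bad y -> y = a \/ y = b) ->
  (forall y, ~~ bad y -> connect e y (s y)) -> connect e (s a) b.
Proof.
move=> ab bad_ab e_good; have sab : fconnect s (s a) b.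
  by rewrite -(same_fconnect1 (@perm_inj _ s)).
rewrite -(iter_findex sab); apply: connect_iter => j jb; rewrite iterS; apply: e_good.
have jn : j < fingraph.order s (s a) by apply: ltn_trans jb (findex_max sab).
apply/negP => /bad_ab[]; first exact/(connect_trans (fconnect1 s a))/fconnect_iter.
  move=> /eqP; rewrite -[X in _ == X]iter_order_pred eq_iter_orbit ?orderSpred //.
  by move: jb (findex_max sab); lia.
move=> /eqP; rewrite -[X in _ == X](iter_findex sab) eq_iter_orbit ?findex_max //.
by move/eqP; lia.
Qed.

End OrbitArcs.

Section Transitions.
Variables (T : finType) (s : {perm T}) (g : pred T).
Local Notation order := (fingraph.order s).

Definition transition y := g y != g (s y).

Definition transitions x := [set y | fconnect s x y & transition y].

Definition two_blocks x := exists a b,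
  [/\ 0 < a, 0 < b & map g (fingraph.orbit s x) = nseq a true ++ nseq b false]%N.

Lemma two_blocksP x : two_blocks x <->
  exists2 a, 0 < a < order x & forall k, k < order x -> g (iter k s x) = (k < a).
Proof.
have gE k : k < order x -> g (iter k s x) = nth false (map g (fingraph.orbit s x)) k.
  by move=> kx; rewrite (nth_map x) ?size_orbit // nth_traject.
split=> [[a [b [a_gt0 b_gt0 gx]]] | [a /andP[a_gt0 ax] gx]].
  have nx : order x = (a + b)%N by rewrite -size_orbit -(size_map g) gx size_cat !size_nseq.
  exists a => [|k kx]; first by rewrite a_gt0 nx -addn1 leq_add2l.
  by rewrite gE // gx nth_cat size_nseq; case: ifP => ka; rewrite nth_nseq ?ka //; case: ifP.
exists a, (order x - a); split; rewrite ?subn_gt0 //.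
apply: (@eq_from_nth _ false) => [|k].
  by rewrite size_map size_orbit size_cat !size_nseq; lia.
rewrite size_map size_orbit => kx; rewrite -gE // gx // nth_cat size_nseq.
by case: ifP => ka; rewrite nth_nseq ?ka //; case: ifP; lia.
Qed.

Lemma iter_no_transition x i k : i <= k ->
  (forall j, i <= j < k -> ~~ transition (iter j s x)) -> g (iter k s x) = g (iter i s x).
Proof.
elim: k => [|k IHk]; first by rewrite leqn0 => /eqP ->.
rewrite leq_eqVlt ltnS => /orP[/eqP -> //|ik] free.
have /negPn/eqP <- : ~~ transition (iter k s x) by apply: free; rewrite ik ltnSn.
by apply: IHk => // j /andP[ij jk]; apply: free; rewrite ij ltnS ltnW.
Qed.

Lemma two_blocks_transitions x : two_blocks x -> #|transitions x| = 2.
Proof.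
case/two_blocksP=> a /andP[a_gt0 ax] gx; set n := order x in ax gx.
have n_gt0 : 0 < n := fingraph.order_gt0 s x.
have trE k : k < n -> transition (iter k s x) = (k == a.-1) || (k == n.-1).
  move=> kx; rewrite /transition -iterS gx //.
  have [kn|kn] := eqVneq k.+1 n.
    by rewrite kn (iter_order (@perm_inj _ s)) -[x]/(iter 0 s x) !gx //; lia.
  by rewrite gx; lia.
suff -> : transitions x = [set iter a.-1 s x; iter n.-1 s x].
  by rewrite cards2 eq_iter_orbit; lia.
apply/setP => y; rewrite !inE; have [xy|xNy] := boolP (fconnect s x y).
  by rewrite -(iter_findex xy) trE ?findex_max // !eq_iter_orbit ?findex_max //; lia.
by apply/esym/negbTE; apply: contra xNy => /orP[] /eqP ->; apply: fconnect_iter.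
Qed.

Lemma labels_between_transitions x t t' : transitions x = [set t; t'] -> t != t' ->
  let m := findex s (s t) t' in
  [/\ fconnect s x (s t), fconnect s (s t) t', m < (order (s t)).-1 &
      forall k, k < order (s t) ->
        g (iter k s (s t)) = if k <= m then g (s t) else ~~ g (s t)].
Proof.
move=> tr_tt' tt' m; set d := s t; set n := order d.
have /setIdP[xt tr_t] : t \in transitions x by rewrite tr_tt' setU11.
have /setIdP[xt' tr_t'] : t' \in transitions x by rewrite tr_tt' !inE eqxx orbT.
have xd : fconnect s x d := connect_trans xt (fconnect1 s t).
have dt' : fconnect s d t'.
  by rewrite (fconnect_sym (@perm_inj _ s)) in xd; apply: connect_trans xd xt'.
have tE : iter n.-1 s d = t := iter_order_pred s t.
have mE : iter m s d = t' := iter_findex dt'.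
have mn : m < n.-1.
  have m_lt : m < n := findex_max dt'.
  have : m != n.-1 by apply: contra_neq tt' => nm; rewrite -tE -mE nm.
  by lia.
have trE j : j < n -> transition (iter j s d) = (j == m) || (j == n.-1).
  move=> jn; have xj : fconnect s x (iter j s d) := connect_trans xd (fconnect_iter _ _ _).
  have := congr1 (fun A : {set T} => iter j s d \in A) tr_tt'; rewrite !inE xj /= => ->.
  by rewrite orbC -tE -mE !eq_iter_orbit ?findex_max // prednK ?fingraph.order_gt0.
have before k : k <= m -> g (iter k s d) = g d.
  move=> km; apply: (iter_no_transition (i := 0)) => // j /andP[_ jk].
  by rewrite trE; lia.
split=> // k kn; case: ifP => [|/negbT]; first exact: before.
rewrite -ltnNge => mk; rewrite (@iter_no_transition d m.+1) //; last first.
  by move=> j /andP[mj jk]; rewrite trE; lia.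
by move: tr_t'; rewrite iterS mE /transition -{1}mE before //; case: (g d); case: (g (s t')).
Qed.

Lemma transitions_two_blocks x :
  #|transitions x| = 2 -> exists2 d, fconnect s x d & two_blocks d.
Proof.
have blocks t t' : transitions x = [set t; t'] -> t != t' -> g (s t) ->
    exists2 d, fconnect s x d & two_blocks d.
  move=> tr_tt' tt' gt; have [xd _ mn gd] := labels_between_transitions tr_tt' tt'.
  exists (s t) => //; apply/two_blocksP; exists (findex s (s t) t').+1 => [|k kn].
    by lia.
  by rewrite gd // gt; case: ifP.
move/eqP/cards2P=> [y1 [y2 [y12 tr_y]]].
have [g1|g1] := boolP (g (s y1)); first exact: blocks y1 y2 tr_y y12 g1.
apply: (blocks y2 y1); rewrite 1?eq_sym 1?setUC //.
have [_ y2_orb mn gd] := labels_between_transitions tr_y y12.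
rewrite -(iter_findex y2_orb) -iterS gd ?(negbTE g1) ?ltnn //.
by have := fingraph.order_gt0 s (s y1); lia.
Qed.

End Transitions.

(** * The mod 2 cycle space of a plane map *)

Local Open Scope ring_scope.

Lemma F2_natr_odd n : (n%:R : 'F_2) = (odd n)%:R.
Proof. by rewrite -Fp_nat_mod // modn2. Qed.

Lemma F2_natr_addb (a b : bool) : ((a (+) b)%:R : 'F_2) = a%:R + b%:R.
Proof. by case: a; case: b; apply/val_inj. Qed.

Lemma F2_natr_inj : injective (fun b : bool => (b%:R : 'F_2)).
Proof. by case; case=> // /(congr1 val). Qed.

Lemma F2_natr_neq0 (x : 'F_2) : x = (x != 0)%:R.
Proof. by case: x => [[|[|//]]] x2; apply/val_inj. Qed.

Lemma F2_addxx (x : 'F_2) : x + x = 0.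
Proof. by rewrite [x]F2_natr_neq0 -F2_natr_addb addbb. Qed.

Lemma F2_addr_eq0 (x y : 'F_2) : (x + y == 0) = (x == y).
Proof.
by rewrite [x]F2_natr_neq0 [y]F2_natr_neq0 -F2_natr_addb; case: (x != 0); case: (y != 0).
Qed.

Lemma sum_pred1_natr (R : pzSemiRingType) (I : finType) (P : pred I) (i : I) :
  \sum_(j | P j) ((j == i)%:R : R) = (P i)%:R.
Proof.
rewrite big_mkcond (bigD1 i) //= eqxx big1 ?addr0 => [|j /negbTE ->]; last by case: (P j).
by case: (P i).
Qed.

Section CycleSpace.
Variables (V D : finType) (alpha sigma : {perm D}) (tail : D -> V).
Hypothesis alphaK : forall d, alpha (alpha d) = d.
Hypothesis alpha_neq : forall d, alpha d != d.
Hypothesis tail_sigma : forall d, tail (sigma d) = tail d.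
Hypothesis tail_surj : forall v, exists d, tail d = v.
Hypothesis darts_connected :
  forall d d', connect (fun x y => (y == sigma x) || (y == alpha x)) d d'.
Hypothesis euler : ((#|V| + fcard (phi alpha sigma) D) * 2 = #|D| + 4)%N.

Local Notation ph := (phi alpha sigma).
Local Notation F2 := ('F_2)^o.

Lemma phi_inj : injective ph.
Proof. by move=> x y /perm_inj /perm_inj. Qed.

Lemma fconnect_alphaE x y : fconnect alpha x y = (y == x) || (y == alpha x).
Proof.
apply/idP/idP => [|/orP[] /eqP ->]; [|exact: connect0 | exact: fconnect1].
have cl : closed (frel alpha) (pred2 x (alpha x)).
  move=> u _ /eqP <-; rewrite !inE (inj_eq (@perm_inj _ alpha)).
  by rewrite -[X in alpha u == X](alphaK x) (inj_eq (@perm_inj _ alpha)) orbC.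
by move/(closed_connect cl); rewrite !inE eqxx.
Qed.

Definition face := {x : D | froots ph x}.
Definition edge := {x : D | froots alpha x}.
Definition face_of d : face :=
  exist (fun x => froots ph x) _ (roots_root (fconnect_sym phi_inj) d).
Definition edge_of d : edge :=
  exist (fun x => froots alpha x) _ (roots_root (fconnect_sym (@perm_inj _ alpha)) d).

Lemma face_of_phi d : face_of (ph d) = face_of d.
Proof. by apply/val_inj/esym/(fingraph.rootP (fconnect_sym phi_inj)); apply: fconnect1. Qed.

Lemma face_of_alpha d : face_of (alpha d) = face_of (sigma d).
Proof. by rewrite -face_of_phi /phi alphaK. Qed.

Lemma face_of_val (r : face) : face_of (val r) = r.
Proof. by apply/val_inj; case: r => x /= /eqP. Qed.

Lemma eq_edge_of d d' : (edge_of d == edge_of d') = (d' == d) || (d' == alpha d).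
Proof.
by rewrite -val_eqE /= (root_connect (fconnect_sym (@perm_inj _ alpha))) fconnect_alphaE.
Qed.

Lemma card_face : #|{: face}| = fcard ph D.
Proof. by rewrite card_sig; apply: eq_card => x; rewrite !inE andbT. Qed.

Lemma card_edge : #|{: edge}| = fcard alpha D.
Proof. by rewrite card_sig; apply: eq_card => x; rewrite !inE andbT. Qed.

Lemma card_darts : #|D| = (fcard alpha D).*2.
Proof.
rewrite -mul2n mulnC fcard_order_set //; first exact: perm_inj.
apply/subsetP => x _; rewrite inE; apply/eqP.
by rewrite /fingraph.order (eq_card (fconnect_alphaE x)) card2 eq_sym alpha_neq.
Qed.

Definition face_boundary_fun (h : {ffun face -> F2}) : {ffun edge -> F2} :=
  [ffun r => h (face_of (val r)) + h (face_of (alpha (val r)))].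

Definition edge_boundary_fun (x : {ffun edge -> F2}) : {ffun V -> F2} :=
  [ffun v => \sum_(d | tail d == v) x (edge_of d)].

Fact face_boundary_fun_is_linear : linear face_boundary_fun.
Proof. by move=> a h h'; apply/ffunP => r; rewrite !ffunE scalerDr addrACA. Qed.

Fact edge_boundary_fun_is_linear : linear edge_boundary_fun.
Proof.
move=> a x x'; apply/ffunP => v; rewrite !ffunE scaler_sumr -big_split.
by apply: eq_bigr => d _; rewrite !ffunE.
Qed.

HB.instance Definition _ := GRing.isLinear.Build F2 _ _ _ face_boundary_fun
  face_boundary_fun_is_linear.
HB.instance Definition _ := GRing.isLinear.Build F2 _ _ _ edge_boundary_fun
  edge_boundary_fun_is_linear.

Definition face_boundary := linfun face_boundary_fun.
Definition edge_boundary := linfun edge_boundary_fun.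

Lemma face_boundaryE h d :
  face_boundary h (edge_of d) = h (face_of d) + h (face_of (alpha d)).
Proof.
rewrite lfunE ffunE; have : val (edge_of d) \in pred2 d (alpha d).
  by rewrite inE -fconnect_alphaE connect_root.
by case/pred2P => ->; rewrite ?alphaK // addrC.
Qed.

Lemma edge_boundaryE x v : edge_boundary x v = \sum_(d | tail d == v) x (edge_of d).
Proof. by rewrite lfunE ffunE. Qed.

Lemma edge_face_boundary h : edge_boundary (face_boundary h) = 0.
Proof.
apply/ffunP => v; rewrite edge_boundaryE ffunE.
under eq_bigr => d _ do rewrite face_boundaryE face_of_alpha.
rewrite big_split /= [X in X + _](reindex_inj (@perm_inj _ sigma)) /=.
by under [X in X + _]eq_bigl => d do rewrite tail_sigma; rewrite F2_addxx.
Qed.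

Lemma dim_lker_face_boundary : (\dim (lker face_boundary) <= 1)%N.
Proof.
have [r0 _ | no_face] := pickP (fun _ : face => true); last first.
  suff -> : lker face_boundary = 0%VS by rewrite dimv0.
  apply/vspaceP => h; rewrite memv0 memv_ker; apply/idP/idP => [_|/eqP ->].
    by apply/eqP/ffunP => r; have := no_face r.
  by rewrite linear0.
suff /dimvS : (lker face_boundary <= <[[ffun=> 1] : {ffun face -> F2}]>)%VS.
  by rewrite dim_vline; case: (_ != _) => // /leqW.
apply/subvP => h; rewrite memv_ker => /eqP h0.
have h_alpha d : h (face_of (alpha d)) = h (face_of d).
  by apply/esym/eqP; rewrite -F2_addr_eq0 -face_boundaryE h0 ffunE.
have cl : closed (fun x y => (y == sigma x) || (y == alpha x))
                 [pred d | h (face_of d) == h r0].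
  by move=> x y /orP[] /eqP ->; rewrite !inE -?face_of_alpha h_alpha.
apply/vlineP; exists (h r0); apply/ffunP => r; rewrite !ffunE [RHS]mulr1.
have := closed_connect cl (darts_connected (val r0) (val r)).
by rewrite !inE !face_of_val eqxx => /esym/eqP.
Qed.

Definition vertex_delta v : {ffun V -> F2} := [ffun w => (w == v)%:R].
Definition edge_delta d : {ffun edge -> F2} := [ffun r => (r == edge_of d)%:R].

Lemma edge_boundary_delta d :
  edge_boundary (edge_delta d) = vertex_delta (tail d) + vertex_delta (tail (alpha d)).
Proof.
apply/ffunP => w; rewrite edge_boundaryE !ffunE.
under eq_bigr => d' _ do rewrite ffunE eq_sym eq_edge_of.
have or_addb d' : (d' == d) || (d' == alpha d) = (d' == d) (+) (d' == alpha d).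
  by have [->|//] := eqVneq d' d; rewrite eq_sym (negbTE (alpha_neq d)).
under eq_bigr => d' _ do rewrite or_addb F2_natr_addb.
by rewrite big_split /= !sum_pred1_natr !(eq_sym w).
Qed.

Lemma dim_limg_edge_boundary : (#|V| <= (\dim (limg edge_boundary)).+1)%N.
Proof.
have [v0 _ | no_vertex] := pickP (fun _ : V => true); last by rewrite eq_card0.
have [d0 _] := tail_surj v0.
pose U := (limg edge_boundary + <[vertex_delta (tail d0)]>)%VS.
have cl : closed (fun x y => (y == sigma x) || (y == alpha x))
                 [pred d | vertex_delta (tail d) \in U].
  move=> x y /orP[] /eqP ->; rewrite !inE ?tail_sigma //.
  have Ub : edge_boundary (edge_delta x) \in U.
    by rewrite -[X in X \in U]addr0 memv_add ?mem0v ?memv_img ?memvf.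
  apply/idP/idP => [Ux|Uax].
    rewrite -[vertex_delta _](addKr (vertex_delta (tail x))) -edge_boundary_delta.
    by apply: memvD; rewrite ?memvN.
  rewrite -[vertex_delta _](addrK (vertex_delta (tail (alpha x)))) -edge_boundary_delta.
  exact: memvB.
have U_full : (fullv <= U)%VS.
  apply/subvP => f _; rewrite [f](_ : _ = \sum_v f v *: vertex_delta v).
    apply: memv_suml => v _; apply: memvZ; have [d <-] := tail_surj v.
    have := closed_connect cl (darts_connected d0 d); rewrite !inE => <-.
    by rewrite -[X in X \in U]add0r memv_add ?mem0v ?memv_line.
  apply/ffunP => w; rewrite sum_ffunE (bigD1 w) //= big1 => [|v /negbTE vw].
    by rewrite !ffunE eqxx addr0 [RHS]mulr1.
  by rewrite !ffunE eq_sym vw; apply: scaler0.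
have := dimvS U_full; rewrite dimvf /dim /= muln1 => /leq_trans; apply.
apply: leq_trans (dimv_add_leqif _ _) _; rewrite dim_vline.
by case: (_ != _); rewrite ?addn0 ?addn1.
Qed.

Lemma limg_face_boundary : limg face_boundary = lker edge_boundary.
Proof.
have sub : (limg face_boundary <= lker edge_boundary)%VS.
  by apply/subvP => _ /memv_imgP[h _ ->]; rewrite memv_ker edge_face_boundary.
apply/eqP; rewrite eqEdim sub /=.
have := limg_ker_dim face_boundary fullv; have := limg_ker_dim edge_boundary fullv.
rewrite !capfv !dimvf /dim /= !muln1 card_face card_edge.
have := dim_lker_face_boundary; have := dim_limg_edge_boundary.
move: euler; rewrite card_darts -mul2n.
set kF := \dim (lker _); set iE := \dim (limg _); set kE := \dim (lker _).
set iF := \dim (limg _); lia.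
Qed.

Lemma even_edge_set_dual_cut (z : pred D) :
  (forall d, z (alpha d) = z d) ->
  (forall v, ~~ odd #|[set d | tail d == v & z d]|) ->
  exists P : pred D, (forall d, P (ph d) = P d) /\ (forall d, P (alpha d) = P d (+) z d).
Proof.
move=> z_alpha z_even; pose zf : {ffun edge -> F2} := [ffun r => (z (val r))%:R].
have zfE d : zf (edge_of d) = (z d)%:R.
  rewrite ffunE; have : val (edge_of d) \in pred2 d (alpha d).
    by rewrite inE -fconnect_alphaE connect_root.
  by case/pred2P => ->; rewrite ?z_alpha.
have : zf \in lker edge_boundary.
  rewrite memv_ker; apply/eqP/ffunP => v; rewrite edge_boundaryE ffunE.
  rewrite (eq_bigr (fun d => if z d then 1 else 0)) => [|d _]; last by rewrite zfE; case: (z d).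
  by rewrite -big_mkcondr sumr_const F2_natr_odd -cardsE (negbTE (z_even v)).
rewrite -limg_face_boundary => /memv_imgP[h _ zh].
exists (fun d => h (face_of d) != 0); split=> d; first by rewrite face_of_phi.
apply: F2_natr_inj; rewrite /= F2_natr_addb -!F2_natr_neq0 -zfE zh face_boundaryE.
by rewrite addrA F2_addxx add0r.
Qed.

End CycleSpace.

Local Close Scope ring_scope.

(** * Directed cycles and the two sides of a cycle *)

Lemma connect_pred_back (T : finType) (e : rel T) (a : pred T) x y :
  (forall u v, e u v -> a v -> a u) -> connect e x y -> a y -> a x.
Proof.
move=> back /connectP[p]; elim: p x => [|u p IHp] x /=; first by move=> _ ->.
by case/andP=> exu pu yl ay; apply: back exu (IHp u pu yl ay).
Qed.

Lemma connect_in_cycle (T : finType) (e : rel T) (f : T -> T) (c : seq T) :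
  connect_sym e -> uniq c -> {in c, forall x, connect e (f x) (f (next c x))} ->
  {in c &, forall x y, connect e (f x) (f y)}.
Proof.
move=> sym_e uniq_c f_next x y xc yc.
have k_next z : connect e (f x) (f (next c z)) = connect e (f x) (f z).
  have [zc|zNc] := boolP (z \in c); last by rewrite next_nth (negbTE zNc).
  by rewrite (same_connect_r sym_e (f_next z zc)).
have xy : fconnect (next c) x y by rewrite (fconnect_cycle (cycle_next uniq_c)).
by have /= <- := fconnect_eq_invariant (k := fun z => connect e (f x) (f z)) k_next xy.
Qed.

Lemma uniq_map_inj_in (T1 T2 : eqType) (f : T1 -> T2) (s : seq T1) :
  uniq (map f s) -> {in s &, injective f}.
Proof.
elim: s => //= x s IHs /andP[fxNs uniq_fs] y z; rewrite !inE.
case/orP=> [/eqP->|ys] /orP[/eqP->|zs] // fyz.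
- by move: fxNs; rewrite fyz map_f.
- by move: fxNs; rewrite -fyz map_f.
- exact: IHs.
Qed.

Section DirectedCycle.
Variables (V D : finType) (alpha : {perm D}) (tail : D -> V) (X : pred D) (c : seq D).
Hypothesis alphaK : forall d, alpha (alpha d) = d.
Hypothesis X_alpha : forall d, X (alpha d) = ~~ X d.
Hypothesis uniq_tails : uniq (map tail c).
Hypothesis all_X : all X c.
Hypothesis cycle_c : path.cycle (fun d d' => Defs.head alpha tail d == tail d') c.

Definition on_cycle d := (d \in c) || (alpha d \in c).

Definition cycle_back w := alpha (prev c w).

Lemma on_cycle_alpha d : on_cycle (alpha d) = on_cycle d.
Proof. by rewrite /on_cycle alphaK orbC. Qed.

Lemma X_cycle d : d \in c -> X d.
Proof. exact: allP all_X d. Qed.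

Lemma uniq_cycle : uniq c.
Proof. exact: map_uniq uniq_tails. Qed.

Lemma tail_alpha_cycle d : d \in c -> tail (alpha d) = tail (next c d).
Proof. by move=> dc; apply/eqP; apply: next_cycle cycle_c dc. Qed.

Lemma tail_cycle_back w : w \in c -> tail (cycle_back w) = tail w.
Proof. by move=> wc; apply/eqP; apply: prev_cycle cycle_c wc. Qed.

Lemma X_cycle_back w : w \in c -> X (cycle_back w) = false.
Proof. by move=> wc; rewrite X_alpha X_cycle ?mem_prev. Qed.

Lemma cycle_back_neq w : w \in c -> cycle_back w != w.
Proof. by move=> wc; apply: contraFneq (X_cycle_back wc) => ->; apply: X_cycle. Qed.

Lemma on_cycle_vertex y : on_cycle y -> exists2 w, w \in c & tail w = tail y.
Proof.
case/orP=> [yc|ayc]; first by exists y.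
by exists (next c (alpha y)); rewrite ?mem_next // -tail_alpha_cycle ?alphaK.
Qed.

Lemma on_cycle_at w y : w \in c -> tail y = tail w ->
  on_cycle y = (y == w) || (y == cycle_back w).
Proof.
move=> wc tyw; apply/idP/idP => [|/orP[] /eqP ->]; last first.
- by rewrite /on_cycle /cycle_back alphaK mem_prev wc orbT.
- by rewrite /on_cycle wc.
have tail_inj := uniq_map_inj_in uniq_tails.
case/orP=> [yc|ayc]; first by rewrite (tail_inj _ _ yc wc tyw) eqxx.
have nc : next c (alpha y) \in c by rewrite mem_next.
have <- : next c (alpha y) = w by apply: tail_inj; rewrite // -tail_alpha_cycle ?alphaK.
by rewrite /cycle_back (prev_next uniq_cycle) alphaK eqxx orbT.
Qed.

Lemma on_cycle_degree_even v : ~~ odd #|[set d | tail d == v & on_cycle d]|.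
Proof.
have [->|[y /setIdP[/eqP tyv yC]]] := set_0Vmem [set d | tail d == v & on_cycle d].
  by rewrite cards0.
have [w wc twy] := on_cycle_vertex yC.
suff -> : [set d | tail d == v & on_cycle d] = [set w; cycle_back w].
  by rewrite cards2 eq_sym cycle_back_neq.
apply/setP => d; rewrite !inE; have [tdv|] := eqVneq (tail d) v.
  by rewrite (on_cycle_at wc) // tdv -tyv twy.
move=> tdv; apply/esym/negbTE; apply: contra tdv => /orP[] /eqP ->.
  by rewrite twy tyv.
by rewrite tail_cycle_back // twy tyv.
Qed.

Lemma reverse_onE d : reverse_on alpha X c d = X d (+) on_cycle d.
Proof.
rewrite /reverse_on /on_cycle; case: ifP => [/X_cycle -> //|_].
by case: ifP => [/X_cycle|_]; rewrite ?X_alpha ?addbF // => /negbTE ->.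
Qed.

Lemma card_reverse_on_at v :
  #|[set d | tail d == v & reverse_on alpha X c d]| = #|[set d | tail d == v & X d]|.
Proof.
under eq_finset => d do rewrite reverse_onE.
have [w /andP[wc /eqP twv]|no_cycle] := pickP [pred w in c | tail w == v]; last first.
  apply: eq_card => d; rewrite !inE; have [tdv|] := eqVneq (tail d) v => //=.
  case: (boolP (on_cycle d)) => [/on_cycle_vertex[w wc twd]|]; rewrite ?addbF //.
  by have := no_cycle w; rewrite /= wc twd tdv eqxx.
set S := [set d | tail d == v & X d].
have -> : [set d | tail d == v & X d (+) on_cycle d] = cycle_back w |: (S :\ w).
  apply/setP => d; rewrite !inE; have [->|db] := eqVneq d (cycle_back w).
    rewrite tail_cycle_back // twv X_cycle_back //.
    by rewrite (on_cycle_at wc) ?tail_cycle_back ?eqxx ?orbT.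
  have [tdv|] := eqVneq (tail d) v; last by rewrite andbF.
  rewrite (on_cycle_at wc) ?tdv // (negbTE db) orbF.
  by have [->|dw] := eqVneq d w; rewrite ?addbF ?dw // X_cycle.
by rewrite cardsU1 (cardsD1 w S) !inE X_cycle_back // twv X_cycle // eqxx !andbF.
Qed.

Section Region.
Variable sigma : {perm D}.
Hypothesis tail_sigma : forall d, tail (sigma d) = tail d.
Hypothesis tail_conn : forall d d', tail d = tail d' -> fconnect sigma d d'.

Local Notation R := (region_adj alpha sigma c).

Lemma region_adj_sym : symmetric R.
Proof.
have eq_alpha u v : (u == alpha v) = (v == alpha u).
  by apply/eqP/eqP => ->; rewrite alphaK.
by move=> x y; rewrite /region_adj orbCA eq_alpha [(y \notin c) && _]andbC.
Qed.

Lemma connect_region_sym : connect_sym R.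
Proof. exact: sym_connect_sym region_adj_sym. Qed.

Lemma region_adj_phi x : R x (phi alpha sigma x).
Proof. by rewrite /region_adj eqxx. Qed.

Lemma region_adj_alpha x : ~~ on_cycle x -> R x (alpha x).
Proof. by rewrite /on_cycle negb_or /region_adj eqxx => ->; rewrite !orbT. Qed.

Lemma connect_region_sigma x : ~~ on_cycle x -> connect R x (sigma x).
Proof.
move/region_adj_alpha/connect1/connect_trans; apply; apply: connect1.
have -> : sigma x = phi alpha sigma (alpha x) by rewrite /phi alphaK.
exact: region_adj_phi.
Qed.

Lemma connect_region_arc a b : tail a = tail b ->
  (forall y, tail y = tail a -> on_cycle y -> y = a \/ y = b) -> connect R (sigma a) b.
Proof.
move=> tab only_ab; apply: (connect_orbit_arc (bad := on_cycle)) (tail_conn tab) _ _.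
  by move=> y /(fconnect_eq_invariant tail_sigma) tay; apply: only_ab.
exact: connect_region_sigma.
Qed.

Lemma connect_region_next x : x \in c -> connect R x (next c x).
Proof.
move=> xc; set w := next c x; have wc : w \in c by rewrite mem_next.
have back_w : cycle_back w = alpha x by rewrite /cycle_back (prev_next uniq_cycle).
apply: connect_trans (connect1 (region_adj_phi x)) _; rewrite /phi -back_w.
apply: connect_region_arc; first exact: tail_cycle_back.
by move=> y; rewrite tail_cycle_back // => /(on_cycle_at wc) -> /orP[] /eqP ->; [right|left].
Qed.

Lemma connect_region_next_alpha x : x \in c -> connect R (alpha x) (alpha (next c x)).
Proof.
move=> xc; set w := next c x; have wc : w \in c by rewrite mem_next.
have back_w : cycle_back w = alpha x by rewrite /cycle_back (prev_next uniq_cycle).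
rewrite connect_region_sym; apply: connect_trans (connect1 (region_adj_phi _)) _.
rewrite /phi alphaK -back_w; apply: connect_region_arc; first by rewrite tail_cycle_back.
by move=> y /(on_cycle_at wc) -> /orP[] /eqP ->; [left|right].
Qed.

Hypothesis darts_connected :
  forall d d', connect (fun x y => (y == sigma x) || (y == alpha x)) d d'.

Lemma connect_region_two_classes c0 : c0 \in c ->
  forall x y, connect R x y = (connect R x c0 == connect R y c0).
Proof.
move=> c0c; have sides x : connect R x c0 || connect R x (alpha c0).
  apply: (connect_pred_back (a := fun x => connect R x c0 || connect R x (alpha c0)))
    (darts_connected x c0) _; last by rewrite connect0.
  move=> u v uv; have [uC|uNC] := boolP (on_cycle u).
    have cyc := connect_in_cycle connect_region_sym uniq_cycle.
    case/orP: uC => [uc|auc] _; first by rewrite (cyc id connect_region_next u c0).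
    by rewrite -[u]alphaK (cyc alpha connect_region_next_alpha (alpha u) c0) ?orbT.
  have uRv : connect R u v.
    by case/orP: uv => /eqP ->; [exact: connect_region_sigma | exact/connect1/region_adj_alpha].
  by rewrite !(same_connect connect_region_sym uRv).
move=> x y; apply/idP/eqP => [xy|]; first by rewrite (same_connect connect_region_sym xy).
have [xc0 /esym yc0|xNc0 yNc0] := boolP (connect R x c0).
  by apply: connect_trans xc0 _; rewrite connect_region_sym.
have := sides x; have := sides y; rewrite -yNc0 (negbTE xNc0) /= => yac0 xac0.
by apply: connect_trans xac0 _; rewrite connect_region_sym.
Qed.

Variable o : D.

Lemma inside_phi x : inside alpha sigma o c (phi alpha sigma x) = inside alpha sigma o c x.
Proof. by rewrite /inside (same_connect connect_region_sym (connect1 (region_adj_phi x))). Qed.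

Hypothesis alpha_neq : forall d, alpha d != d.
Hypothesis tail_surj : forall v, exists d, tail d = v.
Hypothesis euler : ((#|V| + fcard (phi alpha sigma) D) * 2 = #|D| + 4)%N.
Hypothesis c_nonempty : c != [::].

Lemma inside_alpha x :
  inside alpha sigma o c (alpha x) = inside alpha sigma o c x (+) on_cycle x.
Proof.
have [c0 c0c] : exists c0, c0 \in c.
  by case: c c_nonempty => // c0 s _; exists c0; rewrite mem_head.
have [P [P_phi P_alpha]] := even_edge_set_dual_cut alphaK alpha_neq tail_sigma tail_surj
  darts_connected euler on_cycle_alpha on_cycle_degree_even.
have P_closed : closed R P.
  move=> u v /or3P[/eqP->|/eqP->|/and3P[/eqP-> uNc aNc]]; rewrite !unfold_in ?P_phi //.
  by rewrite P_alpha /on_cycle (negbTE uNc) (negbTE aNc) addbF.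
have P_conn u v : connect R u v -> P u = P v.
  by move/(closed_connect P_closed); rewrite !unfold_in.
have c0_sides : connect R (alpha c0) c0 = false.
  by apply/negbTE/negP => /P_conn; rewrite P_alpha /on_cycle c0c addbT; case: (P c0).
have to_c0 u : connect R u c0 = (P u == P c0).
  have [uc0|uNc0] := boolP (connect R u c0); first by rewrite (P_conn _ _ uc0) eqxx.
  have : connect R u (alpha c0).
    by rewrite (connect_region_two_classes c0c) c0_sides (negbTE uNc0).
  by move/P_conn->; rewrite P_alpha /on_cycle c0c addbT; case: (P c0).
have insideP u : inside alpha sigma o c u = P u (+) P o.
  rewrite /inside (connect_region_two_classes c0c) !to_c0.
  by case: (P u); case: (P o); case: (P c0).
by rewrite !insideP P_alpha addbAC.
Qed.

End Region.

End DirectedCycle.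

(** * Complementing the labels inside a directed cycle *)

Lemma transition_orient (D : finType) (alpha sigma : {perm D}) (lab : pred D) d :
  (lab d == lab (sigma d)) != orient alpha sigma lab d ->
  transition sigma lab d = orient alpha sigma lab d.
Proof. by rewrite /transition; case: (lab d == _); case: (orient _ _ _ _). Qed.

Lemma complement_insideE (D : finType) (alpha sigma : {perm D}) o c lab (d : D) :
  complement_inside alpha sigma o c lab d = lab d (+) inside alpha sigma o c d.
Proof. by rewrite /complement_inside; case: (inside _ _ _ _ _); case: (lab d). Qed.

Section Relabeling.
Variables (V D : finType) (alpha sigma : {perm D}) (tail : D -> V).
Variables (o : D) (black : V -> bool) (s0 s1 : V) (lab : pred D) (c : seq D).
Hypothesis quad : plane_quadrangulation alpha sigma tail.
Hypothesis labeling : strong_labeling alpha sigma tail black o s0 s1 lab.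
Hypothesis dcycle : directed_cycle alpha tail (orient alpha sigma lab) c.

Local Notation X := (orient alpha sigma lab).
Local Notation lab' := (complement_inside alpha sigma o c lab).
Local Notation inside := (inside alpha sigma o c).
Local Notation on_cycle := (on_cycle alpha c).

Let alphaK d : alpha (alpha d) = d. Proof. by case: quad => [[/(_ d)[-> _]]]. Qed.
Let alpha_neq d : alpha d != d. Proof. by case: quad => [[/(_ d)[_ ->]]]. Qed.
Let tail_sigma d : tail (sigma d) = tail d. Proof. by case: quad => [[_ ->]]. Qed.
Let tail_conn d d' : tail d = tail d' -> fconnect sigma d d'.
Proof. by case: quad => [[_ _ /(_ d d')]]. Qed.
Let tail_surj v : exists d, tail d = v. Proof. by case: quad => [[_ _ _ /(_ v)]]. Qed.
Let darts_connected d d' : connect (fun x y => (y == sigma x) || (y == alpha x)) d d'.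
Proof. by case: quad. Qed.
Let euler : ((#|V| + fcard (phi alpha sigma) D) * 2 = #|D| + 4)%N.
Proof. by case: quad. Qed.
Let G2 d : (lab d == lab (sigma d)) != X d. Proof. by case: labeling. Qed.

Lemma orient_alpha d : X (alpha d) = ~~ X d.
Proof.
by move: (G2 d); rewrite /orient alphaK; case: (lab d == _); case: (lab (alpha d) == _).
Qed.

Let uniq_tails : uniq (map tail c). Proof. by case: dcycle. Qed.
Let all_X : all X c. Proof. by case: dcycle. Qed.
Let cycle_c : path.cycle (fun d d' => Defs.head alpha tail d == tail d') c.
Proof. by case: dcycle. Qed.
Let c_nonempty : c != [::]. Proof. by case: dcycle; case: (c). Qed.

Lemma inside_sigma d : inside (sigma d) = inside d (+) on_cycle d.
Proof.
have -> : sigma d = phi alpha sigma (alpha d) by rewrite /phi alphaK.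
by rewrite inside_phi // (inside_alpha alphaK orient_alpha uniq_tails all_X cycle_c tail_sigma
  tail_conn darts_connected _ alpha_neq tail_surj euler c_nonempty).
Qed.

Lemma orient_complement_inside d : orient alpha sigma lab' d = reverse_on alpha X c d.
Proof.
rewrite (reverse_onE orient_alpha all_X) /orient !complement_insideE inside_sigma.
by rewrite on_cycle_alpha //; case: (lab _); case: (lab _); case: (inside _); case: (on_cycle d).
Qed.

Lemma complement_inside_G2 d :
  (lab' d == lab' (sigma d)) != orient alpha sigma lab' d.
Proof.
move: (G2 d); rewrite orient_complement_inside (reverse_onE orient_alpha all_X).
rewrite !complement_insideE inside_sigma.
by case: (lab d); case: (lab _); case: (inside d); case: (on_cycle d); case: (X d).
Qed.

Lemma transitions_orient (lab0 : pred D) d :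
  (forall d, (lab0 d == lab0 (sigma d)) != orient alpha sigma lab0 d) ->
  transitions sigma lab0 d = [set y | tail y == tail d & orient alpha sigma lab0 y].
Proof.
move=> G2_0; apply/setP => y; rewrite !inE (transition_orient (G2_0 y)).
by congr (_ && _); apply/idP/eqP => [/(fconnect_eq_invariant tail_sigma)|/esym/tail_conn].
Qed.

Lemma complement_inside_G1 v : v != s0 -> v != s1 ->
  exists d, tail d = v /\ two_blocks sigma lab' d.
Proof.
case: labeling => _ _ /(_ v) G1 _ _ vs0 vs1; have [d [tdv blocks]] := G1 vs0 vs1.
have : #|transitions sigma lab' d| = 2.
  rewrite transitions_orient; last exact: complement_inside_G2.
  under eq_finset => y do rewrite orient_complement_inside.
  rewrite (card_reverse_on_at alphaK orient_alpha uniq_tails all_X cycle_c).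
  by rewrite -transitions_orient // two_blocks_transitions.
case/transitions_two_blocks => d' dd' blocks'; exists d'; split=> //.
by rewrite -tdv (fconnect_eq_invariant tail_sigma dd').
Qed.

Lemma inside_outer_face e : fconnect (phi alpha sigma) o e -> inside e = false.
Proof.
by move=> oe; rewrite -(fconnect_eq_invariant (inside_phi c alphaK sigma o) oe) /inside connect0.
Qed.

Lemma off_cycle_of_constant_labels v b :
  (forall d, tail d = v -> lab d = b) -> forall y, tail y = v -> ~~ on_cycle y.
Proof.
move=> lab_v y tyv; apply/negP => /(on_cycle_vertex alphaK cycle_c)[w wc twy].
by have := G2 w; rewrite (allP all_X w wc) !lab_v ?tail_sigma ?twy // eqxx.
Qed.

Lemma inside_outer_vertex v : on_face alpha sigma tail o v ->
  (forall y, tail y = v -> ~~ on_cycle y) -> forall d, tail d = v -> inside d = false.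
Proof.
case/existsP=> e /andP[oe /eqP tev] off d tdv.
have k_sigma y : (tail (sigma y) == v) && inside (sigma y) = (tail y == v) && inside y.
  rewrite tail_sigma inside_sigma.
  by have [/off/negbTE->|] := eqVneq (tail y) v; rewrite ?addbF.
have := fconnect_eq_invariant k_sigma (tail_conn (etrans tev (esym tdv))).
by rewrite /= tev tdv eqxx /= => <-; rewrite inside_outer_face.
Qed.

Let face_size d : fingraph.order (phi alpha sigma) d = 4.
Proof. by case: quad => _ _ _ _ [/(_ d)[]]. Qed.

Lemma orbit_face e : fingraph.orbit (phi alpha sigma) e =
  [:: e; phi alpha sigma e; iter 2 (phi alpha sigma) e; iter 3 (phi alpha sigma) e].
Proof. by rewrite /fingraph.orbit face_size. Qed.

Lemma complement_inside_inner_face d : ~~ fconnect (phi alpha sigma) o d ->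
  exists e, fconnect (phi alpha sigma) d e /\
            map lab' (fingraph.orbit (phi alpha sigma) e) = [:: false; false; true; true].
Proof.
case: labeling => _ _ _ _ [/(_ d) G3 _] /G3[e [de]]; rewrite !orbit_face /=.
case=> l0 l1 l2 l3; have [in_e|out_e] := boolP (inside e); last first.
  exists e; split=> //; rewrite orbit_face /= !complement_insideE.
  by rewrite !(inside_phi _ alphaK) (negbTE out_e) l0 l1 l2 l3.
exists (iter 2 (phi alpha sigma) e); split; first exact: connect_trans de (fconnect_iter _ _ _).
have face4 : phi alpha sigma (phi alpha sigma (phi alpha sigma (phi alpha sigma e))) = e.
  by have := iter_order (@phi_inj _ alpha sigma) e; rewrite face_size.
by rewrite orbit_face /= face4 !complement_insideE !(inside_phi _ alphaK) in_e l0 l1 l2 l3.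
Qed.

Lemma complement_inside_outer_face e : fconnect (phi alpha sigma) o e ->
  map lab' (fingraph.orbit (phiinv alpha sigma) e) =
  map lab (fingraph.orbit (phiinv alpha sigma) e).
Proof.
move=> oe; apply/eq_in_map => y; rewrite -fconnect_orbit => ey.
suff inside_y : inside y = false by rewrite complement_insideE inside_y addbF.
have inside_phiinv x : inside (phiinv alpha sigma x) = inside x.
  by rewrite -(inside_phi c alphaK sigma o) /phi /phiinv alphaK permKV.
by rewrite -(fconnect_eq_invariant inside_phiinv ey) inside_outer_face.
Qed.

Lemma complement_inside_strong_labeling :
  strong_labeling alpha sigma tail black o s0 s1 lab'.
Proof.
case: labeling => first [G0a G0b] _ _ [_ G3out]; have [_ _ _ on_s0 on_s1] := first.
split=> //; [split=> d tds | exact: complement_inside_G1 | exact: complement_inside_G2 |].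
- rewrite complement_insideE G0a // (inside_outer_vertex on_s0 _ tds) //.
  exact: off_cycle_of_constant_labels G0a.
- rewrite complement_insideE G0b // (inside_outer_vertex on_s1 _ tds) //.
  exact: off_cycle_of_constant_labels G0b.
split; first exact: complement_inside_inner_face.
by move=> e oe te; rewrite complement_inside_outer_face ?G3out.
Qed.

End Relabeling.

Theorem lemma25 (V D : finType) (alpha sigma : {perm D}) (tail : D -> V)
  (o : D) (black : V -> bool) (s0 s1 : V) (lab : D -> bool) (c : seq D) :
  plane_quadrangulation alpha sigma tail ->
  proper_bicoloring alpha tail black ->
  strong_labeling alpha sigma tail black o s0 s1 lab ->
  directed_cycle alpha tail (orient alpha sigma lab) c ->
  strong_labeling alpha sigma tail black o s0 s1
    (complement_inside alpha sigma o c lab) /\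
  (forall d, orient alpha sigma (complement_inside alpha sigma o c lab) d =
             reverse_on alpha (orient alpha sigma lab) c d).
Proof.
move=> quad _ labeling dcycle; split; first exact: complement_inside_strong_labeling.
exact: (orient_complement_inside quad labeling dcycle).
Qed.
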